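(* Let $C\subset\mathbb P^n_K$ be a projective curve (closed subscheme of dimension $1$) over an algebraically closed field $K$ whose $h$-vector is positive. Then the arithmetic genus $g$ of $C$ is non-negative.
   Context: Let $S=K[x_0,\dots,x_n]$ and $I$ the saturated ideal of $C$. The Hilbert series $\sum_t\dim_K(S/I)_tz^t$ equals $h(z)/(1-z)^2$ with $h(z)=h_0+\dots+h_sz^s$, $h_s\ne0$; $(h_0,\dots,h_s)$ is the $h$-vector, positive if $h_i>0$ for all $i$. The Hilbert polynomial of $C$ is $P_C(t)=\deg(C)\,t+1-g$, which defines the arithmetic genus $g$. *)

From mathcomp Require Import all_boot all_order all_algebra.
From mathcomp Require Import mpoly.
Set Implicit Arguments.
Unset Strict Implicit.
Unset Printing Implicit Defensive.
Import GRing.Theory Num.Theory.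
Local Open Scope ring_scope.

(* The polynomial ring S = K[x_0, ..., x_n] is {mpoly K[n.+1]}. *)

Definition is_ideal (K : fieldType) (n : nat) (I : pred {mpoly K[n.+1]}) : Prop :=
  [/\ 0 \in I,
      (forall f g, f \in I -> g \in I -> f + g \in I) &
      (forall f g, g \in I -> f * g \in I)].

Definition is_homogeneous_ideal (K : fieldType) (n : nat)
  (I : pred {mpoly K[n.+1]}) : Prop :=
  is_ideal I /\ forall f d, f \in I -> pihomog mdeg d f \in I.

(* I is saturated w.r.t. the irrelevant ideal m = (x_0,...,x_n):
   (I : m^oo) = I, i.e. if m^k f is contained in I for some k then f is in I.
   m^k is the ideal spanned by the homogeneous polynomials of degree k. *)
Definition is_saturated (K : fieldType) (n : nat) (I : pred {mpoly K[n.+1]}) : Prop :=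
  forall f, (exists k : nat, forall g, g \is k.-homog -> g * f \in I) -> f \in I.

(* A family of m homogeneous polynomials of degree t whose classes in
   (S/I)_t are K-linearly independent. *)
Definition indep_mod (K : fieldType) (n : nat) (I : pred {mpoly K[n.+1]})
  (t m : nat) : Prop :=
  exists F : 'I_m -> {mpoly K[n.+1]},
    (forall i, F i \is t.-homog) /\
    forall c : 'I_m -> K, (\sum_(i < m) c i *: F i) \in I -> forall i, c i = 0.

(* hilb_fn I t m : dim_K (S/I)_t = m. *)
Definition hilb_fn (K : fieldType) (n : nat) (I : pred {mpoly K[n.+1]})
  (t m : nat) : Prop :=
  indep_mod I t m /\ ~ indep_mod I t m.+1.

(* Coefficients of h(z) = (1-z)^2 * sum_t HF(t) z^t, i.e. the second
   difference of the Hilbert function (with HF(-1) = HF(-2) = 0). *)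
Definition hvec (HF : nat -> nat) (i : nat) : int :=
  match i with
  | 0 => (HF 0)%:Z
  | 1 => (HF 1)%:Z - 2 * (HF 0)%:Z
  | k.+2 => (HF k.+2)%:Z - 2 * (HF k.+1)%:Z + (HF k)%:Z
  end.

Definition hvec_positive (HF : nat -> nat) : Prop :=
  exists s : nat, (forall i, (i <= s)%N -> 0 < hvec HF i) /\
                  (forall i, (s < i)%N -> hvec HF i = 0).

(* The Hilbert polynomial of S/I is deg * t + 1 - g with deg > 0
   (so C has dimension 1); this defines the arithmetic genus g. *)
Definition hilb_poly_curve (HF : nat -> nat) (deg : nat) (g : int) : Prop :=
  (0 < deg)%N /\
  exists t0 : nat, forall t : nat, (t0 <= t)%N ->
    (HF t)%:Z = (deg * t)%:Z + 1 - g.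

From mathcomp Require Import all_boot all_order all_algebra.
From mathcomp Require Import mpoly.
From mathcomp Require Import ring.
Set Implicit Arguments.
Unset Strict Implicit.
Local Open Scope ring_scope.
Import Order.TTheory GRing.Theory Num.Theory.

(* With H the Hilbert function, the quantity
   Q(t) = H(t+1) - (t+1) (H(t+1) - H(t)) satisfies Q(0) = H(0) and
   Q(t+1) = Q(t) - (t+1) h_(t+2), so it is non-increasing when the h-vector is
   non-negative.  Since (S/I)_0 is a quotient of K we have H(0) <= 1, and for
   large t, where H(t) = deg t + 1 - g, one computes Q(t) = 1 - g. *)

Lemma dhomog0_mpolyC (K : fieldType) (n : nat) (p : {mpoly K[n]}) :
  p \is 0.-homog -> p = (p@_0%MM)%:MP.
Proof.
move=> hp; apply/mpolyP=> m; rewrite mcoeffC.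
have [->|nz] := eqVneq m 0%MM; first by rewrite mulr1.
by rewrite mulr0; apply: (dhomog_nemf_coeff hp); rewrite mdeg_eq0.
Qed.

Lemma indep_mod0_le1 (K : fieldType) (n : nat) (I : pred {mpoly K[n.+1]})
  (m : nat) : 0 \in I -> indep_mod I 0 m -> (m <= 1)%N.
Proof.
move=> I0 [F [F0 Find]]; rewrite leqNgt; apply/negP => m_gt1.
pose i0 := Ordinal (ltnW m_gt1); pose i1 := Ordinal m_gt1.
have i10 : i1 != i0 by [].
set a := (F i0)@_0%MM; set b := (F i1)@_0%MM.
have Fi0 : F i0 = a%:MP by apply: dhomog0_mpolyC.
have Fi1 : F i1 = b%:MP by apply: dhomog0_mpolyC.
have [a0|a_neq0] := eqVneq a 0.
  pose c i := if i == i0 then 1 else 0 : K.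
  have := Find c; rewrite (bigD1 i0) //= big1 => [|i /negbTE i_neq0]; last first.
    by rewrite /c i_neq0 scale0r.
  rewrite /c eqxx scale1r addr0 Fi0 a0 => /(_ I0 i0).
  by rewrite eqxx => /eqP; rewrite oner_eq0.
(* the two constants a and b are linearly dependent: b a - a b = 0 *)
pose c i := if i == i0 then b else if i == i1 then - a else 0.
have := Find c; rewrite (bigD1 i0) //= (bigD1 i1) //= big1; last first.
  by move=> i /andP[/negbTE i_neq1 /negbTE i_neq0]; rewrite /c i_neq1 i_neq0 scale0r.
rewrite /c eqxx (negbTE i10) eqxx Fi0 Fi1 addr0 -!mul_mpolyC -!mpolyCM.
rewrite mulNr mulrC -mpolyCD subrr => /(_ I0 i1).
by rewrite (negbTE i10) eqxx => /eqP; rewrite oppr_eq0 (negbTE a_neq0).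
Qed.

Lemma hilb_fn0_le1 (K : fieldType) (n : nat) (I : pred {mpoly K[n.+1]})
  (m : nat) : is_ideal I -> hilb_fn I 0 m -> (m <= 1)%N.
Proof. by case=> I0 _ _ [Hm _]; apply: indep_mod0_le1 Hm. Qed.

Lemma hvec_positive_ge0 (HF : nat -> nat) :
  hvec_positive HF -> forall i, 0 <= hvec HF i.
Proof.
case=> s [hpos hzero] i; have [i_le_s|s_lt_i] := leqP i s.
  exact/ltW/hpos.
by rewrite hzero.
Qed.

Definition hilb_defect (HF : nat -> nat) (t : nat) : int :=
  (HF t.+1)%:Z - (t.+1)%:Z * ((HF t.+1)%:Z - (HF t)%:Z).

Lemma hilb_defect0 (HF : nat -> nat) : hilb_defect HF 0 = (HF 0)%:Z.
Proof. by rewrite /hilb_defect; ring. Qed.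

Lemma hilb_defectS (HF : nat -> nat) (t : nat) :
  hilb_defect HF t.+1 = hilb_defect HF t - (t.+1)%:Z * hvec HF t.+2.
Proof. by rewrite /hilb_defect /hvec; ring. Qed.

Lemma hilb_defect_le_HF0 (HF : nat -> nat) :
  (forall i, 0 <= hvec HF i) -> forall t, hilb_defect HF t <= (HF 0)%:Z.
Proof.
move=> hvec_ge0; elim=> [|t IHt]; first by rewrite hilb_defect0.
rewrite hilb_defectS (le_trans _ IHt) // lerBlDr lerDl.
exact: mulr_ge0.
Qed.

Lemma hilb_defect_affine (HF : nat -> nat) (d t : nat) (c : int) :
  (HF t)%:Z = (d * t)%:Z + c -> (HF t.+1)%:Z = (d * t.+1)%:Z + c ->
  hilb_defect HF t = c.
Proof.
by rewrite /hilb_defect => -> ->; rewrite !PoszM -addn1 PoszD; ring.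
Qed.

Theorem proposition1p4 (K : closedFieldType) (n : nat)
  (I : pred {mpoly K[n.+1]})
  (HI : is_homogeneous_ideal I) (Hsat : is_saturated I)
  (HF : nat -> nat) (HHF : forall t, hilb_fn I t (HF t))
  (deg : nat) (g : int) (Hcurve : hilb_poly_curve HF deg g)
  (Hpos : hvec_positive HF) :
  0 <= g.
Proof.
have HF0_le1 : (HF 0)%:Z <= 1 by rewrite lez_nat; exact: hilb_fn0_le1 HI.1 (HHF 0).
case: Hcurve => _ [t0 Ht0].
have defect_t0 : hilb_defect HF t0 = 1 - g.
  by apply: hilb_defect_affine; rewrite addrA; apply: Ht0.
have := hilb_defect_le_HF0 (hvec_positive_ge0 Hpos) t0.
rewrite defect_t0 => /le_trans/(_ HF0_le1).
by rewrite lerBlDr lerDl.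
Qed.
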